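(* Let $\alpha$ be a quasiorder on a set $A$. The following are equivalent: (1) $\alpha$ is a half-space on $A$; (2) for every three-element subset $B\subseteq A$, the restriction $\alpha\cap(B\times B)$ is a half-space on $B$; (3) for all $x,y,z\in A$: if $(x,y)\notin\alpha$, $(y,x)\notin\alpha$, $(x,z)\in\alpha$ and $z\neq x$, then $(y,z)\in\alpha$; (4) for all $x,y,z\in A$: if $(z,y)\notin\alpha$, $(y,z)\notin\alpha$, $(x,z)\in\alpha$ and $x\neq z$, then $(x,y)\in\alpha$.
   Context: A quasiorder on a set $A$ is a reflexive and transitive relation on $A$; $\Delta_A=\{(a,a)\mid a\in A\}$. A quasiorder $\alpha$ on $A$ is a half-space on $A$ if there exists a quasiorder $\beta$ on $A$ with $\alpha\cup\beta=A\times A$ and $\alpha\cap\beta=\Delta_A$ (equivalently, $\Delta_A\cup((A\times A)\setminus\alpha)$ is transitive). *)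

Set Implicit Arguments.

Definition quasiorder (T : Type) (r : T -> T -> Prop) : Prop :=
  (forall a, r a a) /\ (forall a b c, r a b -> r b c -> r a c).

Definition half_space (T : Type) (alpha : T -> T -> Prop) : Prop :=
  quasiorder alpha /\
  exists beta : T -> T -> Prop,
    quasiorder beta /\
    (forall x y, alpha x y \/ beta x y) /\
    (forall x y, (alpha x y /\ beta x y) <-> x = y).

Definition triple (A : Type) (a b c : A) : Type :=
  { x : A | x = a \/ x = b \/ x = c }.

Definition restrict3 {A : Type} (alpha : A -> A -> Prop) (a b c : A)
  : triple a b c -> triple a b c -> Prop :=
  fun u v => alpha (proj1_sig u) (proj1_sig v).
Arguments restrict3 {A} alpha a b c _ _.

From Stdlib Require Import Classical ProofIrrelevance Relation_Definitions.

Set Implicit Arguments.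

(* A complementary quasiorder [beta] of a half-space [alpha] is forced to be
   [Δ ∪ (T×T \ alpha)], so [alpha] is a half-space exactly when this relation
   is transitive.  A violation of that transitivity, [~ alpha x y],
   [~ alpha y z], [alpha x z] with [x <> z], involves only three points, which
   gives the local criterion; conditions (3) and (4) are the same violation
   read off from [x] and from [z] respectively. *)

Definition reflexive_complement (T : Type) (r : T -> T -> Prop) : T -> T -> Prop :=
  fun x y => x = y \/ ~ r x y.

Lemma transitive_reflexive_complementP (T : Type) (r : T -> T -> Prop) :
  transitive T (reflexive_complement r) <->
  (forall x y z, ~ r x y -> ~ r y z -> r x z -> x = z).
Proof.
  split.
  - intros Ht x y z nxy nyz rxz.
    destruct (Ht x y z (or_intror nxy) (or_intror nyz)); [assumption | contradiction].
  - intros H x y z Hxy Hyz.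
    destruct Hxy as [<- | nxy]; [exact Hyz |].
    destruct Hyz as [<- | nyz]; [right; exact nxy |].
    destruct (classic (r x z)) as [rxz | nxz].
    + left; exact (H x y z nxy nyz rxz).
    + right; exact nxz.
Qed.

Lemma half_space_iff_transitive_complement (T : Type) (r : T -> T -> Prop) :
  quasiorder r -> half_space r <-> transitive T (reflexive_complement r).
Proof.
  intros Hr; rewrite transitive_reflexive_complementP; split.
  - intros [_ [beta [[_ beta_trans] [Hunion Hinter]]]] x y z nxy nyz rxz.
    assert (bxy : beta x y) by (destruct (Hunion x y); tauto).
    assert (byz : beta y z) by (destruct (Hunion y z); tauto).
    apply Hinter; split; [exact rxz | exact (beta_trans _ _ _ bxy byz)].
  - intros H; split; [exact Hr |].
    exists (reflexive_complement r); split; [split | split].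
    + intros a; left; reflexivity.
    + apply transitive_reflexive_complementP; exact H.
    + intros x y; destruct (classic (r x y)); [left | right; right]; assumption.
    + intros x y; split.
      * intros [rxy [e | nxy]]; [exact e | contradiction].
      * intros <-; split; [apply (proj1 Hr) | left; reflexivity].
Qed.

Lemma quasiorder_restrict3 (A : Type) (r : A -> A -> Prop) (a b c : A) :
  quasiorder r -> quasiorder (restrict3 r a b c).
Proof.
  intros [Hrefl Htrans]; split; intros *; [apply Hrefl | apply Htrans].
Qed.

Lemma transitive_complement_restrict3 (A : Type) (r : A -> A -> Prop) (a b c : A) :
  transitive A (reflexive_complement r) ->
  transitive (triple a b c) (reflexive_complement (restrict3 r a b c)).
Proof.
  rewrite !transitive_reflexive_complementP.
  intros H [x px] [y py] [z pz] nxy nyz rxz.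
  apply subset_eq_compat; exact (H x y z nxy nyz rxz).
Qed.

Lemma transitive_complement_of_triples (A : Type) (r : A -> A -> Prop) :
  quasiorder r ->
  (forall a b c, a <> b -> a <> c -> b <> c ->
     transitive (triple a b c) (reflexive_complement (restrict3 r a b c))) ->
  transitive A (reflexive_complement r).
Proof.
  intros [Hrefl _] H; apply transitive_reflexive_complementP.
  intros x y z nxy nyz rxz.
  destruct (classic (x = z)) as [e | nxz]; [exact e |].
  assert (nxy' : x <> y) by (intros <-; exact (nxy (Hrefl x))).
  assert (nyz' : y <> z) by (intros <-; exact (nyz (Hrefl y))).
  pose proof (proj1 (transitive_reflexive_complementP _) (H x y z nxy' nxz nyz')) as Hxyz.
  set (tx := exist _ x (or_introl eq_refl) : triple x y z).
  set (ty := exist _ y (or_intror (or_introl eq_refl)) : triple x y z).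
  set (tz := exist _ z (or_intror (or_intror eq_refl)) : triple x y z).
  exact (f_equal (@proj1_sig _ _) (Hxyz tx ty tz nxy nyz rxz)).
Qed.

Lemma transitive_complement_iff_above (T : Type) (r : T -> T -> Prop) :
  quasiorder r ->
  transitive T (reflexive_complement r) <->
  (forall x y z, ~ r x y -> ~ r y x -> r x z -> z <> x -> r y z).
Proof.
  intros [_ Htrans]; rewrite transitive_reflexive_complementP; split.
  - intros H x y z nxy nyx rxz nzx.
    apply NNPP; intros nyz; exact (nzx (eq_sym (H x y z nxy nyz rxz))).
  - intros H x y z nxy nyz rxz.
    apply NNPP; intros nxz; apply nyz, (H x y z nxy); [| exact rxz | auto].
    intros ryx; exact (nyz (Htrans _ _ _ ryx rxz)).
Qed.

Lemma transitive_complement_iff_below (T : Type) (r : T -> T -> Prop) :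
  quasiorder r ->
  transitive T (reflexive_complement r) <->
  (forall x y z, ~ r z y -> ~ r y z -> r x z -> x <> z -> r x y).
Proof.
  intros [_ Htrans]; rewrite transitive_reflexive_complementP; split.
  - intros H x y z nzy nyz rxz nxz.
    apply NNPP; intros nxy; exact (nxz (H x y z nxy nyz rxz)).
  - intros H x y z nxy nyz rxz.
    apply NNPP; intros nxz; apply nxy, (H x y z); [| exact nyz | exact rxz | exact nxz].
    intros rzy; exact (nxy (Htrans _ _ _ rxz rzy)).
Qed.

Theorem proposition2p2 (A : Type) (alpha : A -> A -> Prop)
  (Halpha : quasiorder alpha) :
  (half_space alpha <->
     (forall a b c : A, a <> b -> a <> c -> b <> c ->
        half_space (restrict3 alpha a b c))) /\
  (half_space alpha <->
     (forall x y z : A, ~ alpha x y -> ~ alpha y x -> alpha x z -> z <> x ->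
        alpha y z)) /\
  (half_space alpha <->
     (forall x y z : A, ~ alpha z y -> ~ alpha y z -> alpha x z -> x <> z ->
        alpha x y)).
Proof.
  rewrite (half_space_iff_transitive_complement Halpha).
  split; [| split].
  - split.
    + intros Ht a b c _ _ _.
      apply half_space_iff_transitive_complement; [apply quasiorder_restrict3; exact Halpha |].
      apply transitive_complement_restrict3; exact Ht.
    + intros H; apply transitive_complement_of_triples; [exact Halpha |].
      intros a b c Hab Hac Hbc.
      apply half_space_iff_transitive_complement; [apply quasiorder_restrict3; exact Halpha |].
      exact (H a b c Hab Hac Hbc).
  - exact (transitive_complement_iff_above Halpha).
  - exact (transitive_complement_iff_below Halpha).
Qed.
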